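(* Let $n\ge2$, $0<\alpha_1\le\dots\le\alpha_m$ with $\sum\alpha_j=1$, $(A,\tau)=(\mathbb{C}p_1\oplus\cdots\oplus\mathbb{C}p_m,\tau_1)*(\mathbb{M}_n,tr_n)$ the reduced free product with $\tau_1(p_j)=\alpha_j$, $\{e_{ij}\}$ matrix units of $\mathbb{M}_n$, $u=\sum_{i=1}^{n-1}e_{i,i+1}+e_{n,1}$, $B=C^*(\{u^kp_ju^{-k}:0\le k\le n-1,1\le j\le m\}\cup\{e_{11},\dots,e_{nn}\})$, and for an integer $l$ with $l\mid n$, $1<l<n$, $E=C^*(\{u^kp_ju^{-k}:0\le k\le l-1,1\le j\le m\}\cup\{e_{11},\dots,e_{nn}\}\cup\{u^l,u^{2l},\dots,u^{n-l}\})$. Then (1) for $b\in B$ and $0<k\le n-1$, $\tau(bu^k)=0$ and $\tau(u^kb)=0$; (2) for $e\in E$ and $0<k\le l-1$, $\tau(eu^k)=0$ and $\tau(u^ke)=0$.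
   Context: Reduced free product: the unique unital $C^*$-algebra with state generated by unital copies of the factors, restricting to the given traces, in which they are free, with faithful GNS representation; $\tau$ is a faithful trace. $tr_n$ is the normalized trace on $\mathbb{M}_n$. *)

From mathcomp Require Import all_boot all_algebra.
From mathcomp Require Import reals.
From mathcomp.real_closed Require Import complex.
Set Implicit Arguments. Unset Strict Implicit. Unset Printing Implicit Defensive.
Import GRing.Theory Num.Theory.
Local Open Scope ring_scope.

Definition is_Cstar_algebra (R : realType) (A : algType R[i])
    (st : A -> A) (nrm : A -> R) : Prop :=
  (forall a, st (st a) = a) /\
      (forall a b, st (a + b) = st a + st b) /\
      (forall (c : R[i]) a, st (c *: a) = c^* *: st a) /\
      (forall a b, st (a * b) = st b * st a) /\
      (forall a, nrm a = 0 -> a = 0) /\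
      (forall a b, nrm (a + b) <= nrm a + nrm b) /\
      (forall (c : R[i]) a, ((nrm (c *: a))%:C)%C = `|c| * ((nrm a)%:C)%C) /\
      (forall a b, nrm (a * b) <= nrm a * nrm b) /\
      (forall a, nrm (st a * a) = nrm a ^+ 2) /\
      (forall x : nat -> A,
        (forall e : R, 0 < e -> exists N, forall p q, (N <= p)%N -> (N <= q)%N ->
            nrm (x p - x q) < e) ->
        exists l, forall e : R, 0 < e -> exists N, forall p, (N <= p)%N ->
            nrm (x p - l) < e).

Inductive in_star_alg (R : realType) (A : algType R[i]) (st : A -> A)
    (S : A -> Prop) : A -> Prop :=
  | sa_gen a : S a -> in_star_alg st S a
  | sa_one : in_star_alg st S 1
  | sa_add a b : in_star_alg st S a -> in_star_alg st S b -> in_star_alg st S (a + b)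
  | sa_scale (c : R[i]) a : in_star_alg st S a -> in_star_alg st S (c *: a)
  | sa_mul a b : in_star_alg st S a -> in_star_alg st S b -> in_star_alg st S (a * b)
  | sa_star a : in_star_alg st S a -> in_star_alg st S (st a).

Definition in_Cstar_gen (R : realType) (A : algType R[i]) (st : A -> A)
    (nrm : A -> R) (S : A -> Prop) (a : A) : Prop :=
  forall e : R, 0 < e -> exists b, in_star_alg st S b /\ nrm (a - b) < e.

Definition is_state (R : realType) (A : algType R[i]) (st : A -> A)
    (tau : A -> R[i]) : Prop :=
  [/\ (forall (c : R[i]) a b, tau (c *: a + b) = c * tau a + tau b),
      tau 1 = 1 &
      (forall a, 0 <= tau (st a * a))].

Definition faithful_state (R : realType) (A : algType R[i]) (st : A -> A)
    (tau : A -> R[i]) : Prop :=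
  forall a, tau (st a * a) = 0 -> a = 0.

Definition free_pair (R : realType) (A : algType R[i]) (tau : A -> R[i])
    (A1 A2 : A -> Prop) : Prop :=
  forall s : seq (bool * A), s != [::] ->
    (forall x, x \in s -> (if x.1 then A1 x.2 else A2 x.2) /\ tau x.2 = 0) ->
    sorted (fun x y : bool * A => x.1 != y.1) s ->
    tau (\prod_(x <- s) x.2) = 0.

(* Image of C p_1 + ... + C p_m and of M_n (via matrix units e). *)
Definition span_proj (R : realType) (A : algType R[i]) (m : nat)
    (p : 'I_m -> A) (a : A) : Prop :=
  exists c : 'I_m -> R[i], a = \sum_j c j *: p j.

Definition span_mu (R : realType) (A : algType R[i]) (n : nat)
    (e : 'I_n -> 'I_n -> A) (a : A) : Prop :=
  exists c : 'I_n -> 'I_n -> R[i], a = \sum_i \sum_j c i j *: e i j.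

Definition is_reduced_free_product (R : realType) (A : algType R[i])
    (st : A -> A) (nrm : A -> R) (tau : A -> R[i]) (m n : nat)
    (alpha : 'I_m -> R) (p : 'I_m -> A) (e : 'I_n -> 'I_n -> A) : Prop :=
  is_Cstar_algebra st nrm /\
      is_state st tau /\
      faithful_state st tau /\
      ((forall j, st (p j) = p j) /\ (forall j k, p j * p k = if j == k then p j else 0)
        /\ \sum_j p j = 1) /\
      ((forall i j, st (e i j) = e j i) /\
        (forall i j k l, e i j * e k l = if j == k then e i l else 0)
        /\ \sum_i e i i = 1) /\
      ((forall j, tau (p j) = ((alpha j)%:C)%C) /\
        (forall i j, tau (e i j) = if i == j then (n%:R)^-1 else 0)) /\
      free_pair tau (span_proj p) (span_mu e) /\
      (forall a, in_Cstar_gen st nrm (fun x => (exists j, x = p j) \/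
                                              exists i j, x = e i j) a).

(* The cyclic shift u = sum_{i=1}^{n-1} e_{i,i+1} + e_{n,1} (0-indexed). *)
Definition cyc_shift (R : realType) (A : algType R[i]) (n : nat)
    (e : 'I_n -> 'I_n -> A) : A :=
  \sum_(i : 'I_n) e i (ordS i).

(* A state is bounded, |tau y| <= 4 |y|: for self-adjoint h of norm at most 1/2
   both 1 - h and 1 + h are of the form z^* z (z = 1 - g, g the fixed point of
   the contraction g |-> (h + g^2)/2), so positivity gives |tau h| <= 1.  Hence
   it is enough to treat the *-algebras generated by the given sets.  Grade the
   letters of the free product: the p_j have degree 0 and e_ij has degree
   j - i mod n, so u has degree 1 and u^* degree -1.  All generators of B
   (resp. E) are spans of words of degree divisible by n (resp. l), hence b u^k
   and u^k b are spans of words of degree not divisible by n.  Such a word has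
   trace 0: merging adjacent letters of the same factor and centring letters
   turns it into alternating centred words, to which freeness applies, and
   centring preserves degrees since a matrix letter of nonzero degree is
   already centred. *)

From mathcomp Require Import all_boot all_algebra.
From mathcomp Require Import reals.
From mathcomp.real_closed Require Import complex.
Import GRing.Theory Num.Theory.
Local Open Scope ring_scope.
From mathcomp Require Import all_order ring lra zify.
Import Order.TTheory.
Set Implicit Arguments. Unset Strict Implicit. Unset Printing Implicit Defensive.

Lemma conjC_realC (R : rcfType) (r : R) : ((r%:C)%C)^* = (r%:C)%C.
Proof. by rewrite conj_Creal //; apply/complex_realP; exists r. Qed.

Lemma small_norm_eq0 (R : realType) (w : R[i]) :
  (forall e : R, 0 < e -> `|w| <= (e%:C)%C) -> w = 0.
Proof.
move=> w_small; apply/normr0_eq0; move: (normr_ge0 w) w_small.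
rewrite -(RRe_real (normr_real w)); move: (complex.Re _) => r.
rewrite ler0c => r_ge0 r_small; suff -> : r = 0 by [].
apply/eqP; rewrite eq_le r_ge0 andbT; apply/ler_addgt0Pr => e e0.
by rewrite add0r -lecR r_small.
Qed.

Lemma exists_half_expr_lt (R : realType) (e : R) :
  0 < e -> exists N, (2^-1 : R) ^+ N < e.
Proof.
move=> e0; exists (Num.Def.archi_bound e^-1).
set N := Num.Def.archi_bound e^-1.
have e_lt : e^-1 < N%:R by apply: archi_boundP; rewrite invr_ge0 ltW.
rewrite exprVn invf_plt ?posrE ?exprn_gt0 //.
by apply: lt_trans e_lt _; rewrite -natrX ltr_nat ltn_expl.
Qed.

Lemma scale_half_mulr2n (R : rcfType) (V : lmodType R[i]) (a : V) :
  (((2^-1 : R)%:C)%C *: a) *+ 2 = a.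
Proof.
rewrite -scaler_nat scalerA -(rmorph_nat (real_complex R)) -rmorphM.
by rewrite mulfV ?pnatr_eq0 // rmorph1 scale1r.
Qed.

Section CstarAlgebra.
Variables (R : realType) (A : algType R[i]) (st : A -> A) (nrm : A -> R).
Hypothesis cstarA : is_Cstar_algebra st nrm.

Lemma stK a : st (st a) = a. Proof. by case: cstarA => h _; apply: h. Qed.
Lemma stD a b : st (a + b) = st a + st b.
Proof. by case: cstarA => _ [h _]; apply: h. Qed.
Lemma stZ c a : st (c *: a) = c^* *: st a.
Proof. by case: cstarA => _ [_ [h _]]; apply: h. Qed.
Lemma stM a b : st (a * b) = st b * st a.
Proof. by case: cstarA => _ [_ [_ [h _]]]; apply: h. Qed.
Lemma nrm_eq0 a : nrm a = 0 -> a = 0.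
Proof. by case: cstarA => _ [_ [_ [_ [h _]]]]; apply: h. Qed.
Lemma nrmD a b : nrm (a + b) <= nrm a + nrm b.
Proof. by case: cstarA => _ [_ [_ [_ [_ [h _]]]]]; apply: h. Qed.
Lemma nrmZ c a : ((nrm (c *: a))%:C)%C = `|c| * ((nrm a)%:C)%C.
Proof. by case: cstarA => _ [_ [_ [_ [_ [_ [h _]]]]]]; apply: h. Qed.
Lemma nrmM a b : nrm (a * b) <= nrm a * nrm b.
Proof. by case: cstarA => _ [_ [_ [_ [_ [_ [_ [h _]]]]]]]; apply: h. Qed.
Lemma nrm_stMl a : nrm (st a * a) = nrm a ^+ 2.
Proof. by case: cstarA => _ [_ [_ [_ [_ [_ [_ [_ [h _]]]]]]]]; apply: h. Qed.
Lemma nrm_complete (x : nat -> A) :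
  (forall e : R, 0 < e -> exists N, forall p q, (N <= p)%N -> (N <= q)%N ->
            nrm (x p - x q) < e) ->
  exists l, forall e : R, 0 < e -> exists N, forall p, (N <= p)%N ->
            nrm (x p - l) < e.
Proof. by case: cstarA => _ [_ [_ [_ [_ [_ [_ [_ [_ h]]]]]]]]; apply: h. Qed.

Lemma st0 : st 0 = 0.
Proof. by apply: (@addrI _ (st 0)); rewrite -stD !addr0. Qed.
Lemma stN a : st (- a) = - st a.
Proof. by apply: (@addrI _ (st a)); rewrite -stD !subrr st0. Qed.
Lemma stB a b : st (a - b) = st a - st b.
Proof. by rewrite stD stN. Qed.
Lemma st1 : st 1 = 1.
Proof. by have := stM 1 (st 1); rewrite mul1r !stK mul1r => <-. Qed.
Lemma st_sum (I : Type) (r : seq I) (P : pred I) (F : I -> A) :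
  st (\sum_(i <- r | P i) F i) = \sum_(i <- r | P i) st (F i).
Proof. exact: (big_morph st stD st0). Qed.

Lemma nrmZr (r : R) a : 0 <= r -> nrm ((r%:C)%C *: a) = r * nrm a.
Proof. by move=> r0; apply: complexI; rewrite nrmZ ger0_norm ?ler0c // rmorphM. Qed.
Lemma nrm0 : nrm 0 = 0.
Proof. by rewrite -(scale0r 0) -[0 : R[i]]/((0 : R)%:C)%C nrmZr ?mul0r. Qed.
Lemma nrm_unit c a : `|c| = 1 -> nrm (c *: a) = nrm a.
Proof. by move=> c1; apply: complexI; rewrite nrmZ c1 mul1r. Qed.
Lemma nrmN a : nrm (- a) = nrm a.
Proof. by rewrite -scaleN1r nrm_unit // normrN normr1. Qed.
Lemma nrm_ge0 a : 0 <= nrm a.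
Proof. by have := nrmD a (- a); rewrite subrr nrm0 nrmN; lra. Qed.
Lemma nrmBC a b : nrm (a - b) = nrm (b - a).
Proof. by rewrite -nrmN opprB. Qed.
Lemma nrm_triB a b c : nrm (a - c) <= nrm (a - b) + nrm (b - c).
Proof. by have := nrmD (a - b) (b - c); rewrite addrA subrK. Qed.

Lemma nrm_st a : nrm (st a) = nrm a.
Proof.
suff le_nrm_st b : nrm b <= nrm (st b).
  by apply/eqP; rewrite eq_le le_nrm_st -{2}(stK a) le_nrm_st.
have := nrmM (st b) b; rewrite nrm_stMl expr2.
have [->|b_neq0] := eqVneq (nrm b) 0; first by rewrite nrm_ge0.
by rewrite ler_pM2r // lt_def b_neq0 nrm_ge0.
Qed.

Local Notation half := ((2^-1 : R)%:C)%C.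

Lemma nrm_half_scale a : nrm (half *: a) = 2^-1 * nrm a.
Proof. by rewrite nrmZr // invr_ge0 ler0n. Qed.

Definition nrm_cvg (x : nat -> A) (l : A) : Prop :=
  forall e : R, 0 < e -> exists N, forall q, (N <= q)%N -> nrm (x q - l) < e.

Lemma eq_nrm_cvg {x y l} : (forall q, x q = y q) -> nrm_cvg x l -> nrm_cvg y l.
Proof.
by move=> exy xl e /xl [N xN]; exists N => q /xN; rewrite exy.
Qed.

Lemma nrm_cvg_shift {x l} : nrm_cvg x l -> nrm_cvg (fun q => x q.+1) l.
Proof. by move=> xl e /xl [N xN]; exists N => q Nq; apply/xN/leqW. Qed.

Lemma nrm_cvg_map (f : A -> A) (K : R) {x l} : 0 < K ->
    (forall q, nrm (f (x q) - f l) <= K * nrm (x q - l)) ->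
  nrm_cvg x l -> nrm_cvg (fun q => f (x q)) (f l).
Proof.
move=> K0 fK xl e e0; have [N xN] := xl (e / K) (divr_gt0 e0 K0).
exists N => q /xN xqe; apply: le_lt_trans (fK q) _.
by rewrite mulrC -ltr_pdivlMr.
Qed.

Lemma nrm_cvg_le {x l c} : (forall q, nrm (x q) <= c) -> nrm_cvg x l -> nrm l <= c.
Proof.
move=> xc xl; apply/ler_addgt0Pr => e /xl [N /(_ N (leqnn N)) xNe].
have := nrm_triB l (x N) 0; rewrite !subr0 nrmBC.
by have := xc N; lra.
Qed.

Lemma nrm_cvg_unique {x l1 l2} : nrm_cvg x l1 -> nrm_cvg x l2 -> l1 = l2.
Proof.
move=> xl1 xl2; apply/eqP; rewrite -subr_eq0; apply/eqP/nrm_eq0.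
apply/eqP; rewrite eq_le nrm_ge0 andbT; apply/ler_addgt0Pr => e e0.
have e2 : 0 < e / 2 by rewrite divr_gt0.
have [N1 xN1] := xl1 _ e2; have [N2 xN2] := xl2 _ e2.
have := xN1 (maxn N1 N2) (leq_maxl _ _); have := xN2 (maxn N1 N2) (leq_maxr _ _).
have := nrm_triB l1 (x (maxn N1 N2)) l2; rewrite [nrm (l1 - x _)]nrmBC.
lra.
Qed.

Lemma nrm_cvg_geometric {x} :
  (forall q, nrm (x q.+1 - x q) <= 2^-1 ^+ q) -> exists l, nrm_cvg x l.
Proof.
move=> x_step.
have telescope q d : nrm (x (q + d)%N - x q) <= 2 * 2^-1 ^+ q - 2 * 2^-1 ^+ (q + d).
  elim: d => [|d IHd]; first by rewrite addn0 subrr nrm0 subrr.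
  have := nrm_triB (x (q + d.+1)%N) (x (q + d)%N) (x q).
  by rewrite addnS; have := x_step (q + d)%N; rewrite exprS; lra.
have cauchy q r : (q <= r)%N -> nrm (x r - x q) <= 2 * 2^-1 ^+ q.
  move=> qr; have := telescope q (r - q)%N; rewrite subnKC //.
  have : 0 <= (2^-1 : R) ^+ r by rewrite exprn_ge0 // invr_ge0.
  lra.
apply: nrm_complete => e e0.
have [N Ne] : exists N, (2^-1 : R) ^+ N < e / 2.
  by apply: exists_half_expr_lt; rewrite divr_gt0.
have half_le q : (N <= q)%N -> (2^-1 : R) ^+ q <= 2^-1 ^+ N.
  by move=> Nq; apply: ler_wiXn2l => //; rewrite ?invr_ge0 ?invf_le1; lra.
exists N => q r Nq Nr; have := half_le q Nq; have := half_le r Nr.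
have [qr|/ltnW rq] := leqP q r.
  by rewrite nrmBC; have := cauchy q r qr; lra.
by have := cauchy r q rq; lra.
Qed.

Section SquareRoot.
Variable x : A.
Hypotheses (x_sa : st x = x) (nrm_x : nrm x <= 2^-1).

Definition sqrt_step g := half *: (x + g * g).
Fixpoint sqrt_iter N := if N is N'.+1 then sqrt_step (sqrt_iter N') else 0.

Lemma nrm_sqrt_step g : nrm g <= 2^-1 -> nrm (sqrt_step g) <= 2^-1.
Proof.
move=> g_le; rewrite /sqrt_step nrm_half_scale -[leRHS]mulr1 ler_wpM2l ?invr_ge0 //.
have gg_le : nrm (g * g) <= 2^-1 * 2^-1.
  exact: le_trans (nrmM g g) (ler_pM (nrm_ge0 _) (nrm_ge0 _) g_le g_le).
by apply: le_trans (nrmD _ _) _; have := nrm_x; lra.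
Qed.

Lemma sqrt_step_contract a b : nrm a <= 2^-1 -> nrm b <= 2^-1 ->
  nrm (sqrt_step a - sqrt_step b) <= 2^-1 * nrm (a - b).
Proof.
move=> a_le b_le.
have -> : sqrt_step a - sqrt_step b = half *: (a * (a - b) + (a - b) * b).
  rewrite -scalerBr; congr (_ *: _).
  by rewrite mulrBr mulrBl opprD addrACA subrr add0r addrA subrK.
rewrite nrm_half_scale.
have := nrmD (a * (a - b)) ((a - b) * b).
have := nrmM a (a - b); have := nrmM (a - b) b.
by have := nrm_ge0 a; have := nrm_ge0 b; have := nrm_ge0 (a - b); nra.
Qed.

Lemma nrm_sqrt_iter N : nrm (sqrt_iter N) <= 2^-1.
Proof.
elim: N => [|N IHN] /=; first by rewrite nrm0 invr_ge0.
exact: nrm_sqrt_step.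
Qed.

Lemma sqrt_iter_step N : nrm (sqrt_iter N.+1 - sqrt_iter N) <= 2^-1 ^+ N.
Proof.
elim: N => [|N IHN].
  rewrite subr0 expr0; apply: le_trans (nrm_sqrt_iter 1) _.
  by rewrite invf_le1 ?ler1n.
apply: le_trans (sqrt_step_contract (nrm_sqrt_iter N.+1) (nrm_sqrt_iter N)) _.
by rewrite exprS ler_pM2l ?invr_gt0.
Qed.

Lemma st_sqrt_iter N : st (sqrt_iter N) = sqrt_iter N.
Proof.
elim: N => [|N IHN] /=; first exact: st0.
by rewrite /sqrt_step stZ stD stM IHN x_sa conjC_realC.
Qed.

Lemma sqrt_one_sub : exists z, st z * z = 1 - x.
Proof.
have [g iter_g] := nrm_cvg_geometric sqrt_iter_step.
have nrm_g : nrm g <= 2^-1 := nrm_cvg_le nrm_sqrt_iter iter_g.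
have g_fix : g = sqrt_step g.
  apply: nrm_cvg_unique (nrm_cvg_shift iter_g) _.
  apply: (nrm_cvg_map (K := 2^-1) _ _ iter_g) => [|q]; first by rewrite invr_gt0.
  exact: sqrt_step_contract (nrm_sqrt_iter q) nrm_g.
have g_sa : st g = g.
  apply: (nrm_cvg_unique (eq_nrm_cvg st_sqrt_iter _) iter_g).
  apply: (nrm_cvg_map (f := st) (K := 1) _ _ iter_g) => // q.
  by rewrite -stB nrm_st mul1r.
have x_def : x = g *+ 2 - g * g.
  by rewrite {1}g_fix /sqrt_step scale_half_mulr2n addrK.
exists (1 - g); rewrite stB st1 g_sa x_def.
by rewrite mulrBl !mulrBr !mul1r mulr1 mulr2n -addrA -opprD addrA.
Qed.

End SquareRoot.

Section State.
Variable tau : A -> R[i].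
Hypothesis stateT : is_state st tau.

Lemma tauD a b : tau (a + b) = tau a + tau b.
Proof. by case: stateT => tauL _ _; have := tauL 1 a b; rewrite scale1r mul1r. Qed.
Lemma tau0 : tau 0 = 0.
Proof. by apply: (@addrI _ (tau 0)); rewrite -tauD !addr0. Qed.
Lemma tauZ c a : tau (c *: a) = c * tau a.
Proof. by case: stateT => tauL _ _; have := tauL c a 0; rewrite !addr0 tau0 addr0. Qed.
Lemma tauN a : tau (- a) = - tau a.
Proof. by rewrite -scaleN1r tauZ mulN1r. Qed.
Lemma tauB a b : tau (a - b) = tau a - tau b.
Proof. by rewrite tauD tauN. Qed.
Lemma tau1 : tau 1 = 1.
Proof. by case: stateT. Qed.
Lemma tau_stMl_ge0 a : 0 <= tau (st a * a).
Proof. by case: stateT. Qed.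
Lemma tau_sum (I : Type) (r : seq I) (P : pred I) (F : I -> A) :
  tau (\sum_(i <- r | P i) F i) = \sum_(i <- r | P i) tau (F i).
Proof. exact: (big_morph tau tauD tau0). Qed.

Lemma norm_tau_sa_half h : st h = h -> nrm h <= 2^-1 -> `|tau h| <= 1.
Proof.
move=> h_sa h_le.
have [z1 z1_sq] := sqrt_one_sub h_sa h_le.
have [z2 z2_sq] : exists z, st z * z = 1 - - h.
  by apply: sqrt_one_sub; rewrite ?stN ?h_sa ?nrmN.
have := tau_stMl_ge0 z1; rewrite z1_sq tauB tau1 => sub_ge0.
have := tau_stMl_ge0 z2; rewrite z2_sq tauB tauN tau1 opprK => add_ge0.
have tau_real : tau h \is Num.real.
  by rewrite -[tau h](addKr 1) rpredD ?rpredN ?real1 // ger0_real.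
rewrite real_ler_norml //; apply/andP; split; first by rewrite -subr_ge0 opprK addrC.
by rewrite -subr_ge0.
Qed.

Lemma norm_tau_sa h : st h = h -> `|tau h| <= ((2 * nrm h)%:C)%C.
Proof.
move=> h_sa; have [/nrm_eq0 ->|h_neq0] := eqVneq (nrm h) 0.
  by rewrite tau0 normr0 nrm0 mulr0.
have r_gt0 : 0 < 2 * nrm h by rewrite mulr_gt0 // lt_def h_neq0 nrm_ge0.
set c : R[i] := (((2 * nrm h)^-1)%:C)%C.
have ch_le : `|tau (c *: h)| <= 1.
  apply: norm_tau_sa_half; first by rewrite stZ h_sa conjC_realC.
  by rewrite nrmZr ?invr_ge0 ?(ltW r_gt0) // invfM -mulrA mulVf // mulr1.
have -> : tau h = ((2 * nrm h)%:C)%C * tau (c *: h).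
  by rewrite tauZ mulrA -rmorphM mulfV ?gt_eqF // rmorph1 mul1r.
have r_ge0 : 0 <= ((2 * nrm h)%:C)%C :> R[i] by rewrite ler0c ltW.
by rewrite normrM ger0_norm // -[leRHS]mulr1 ler_wpM2l.
Qed.

Lemma norm_tau_le y : `|tau y| <= ((4 * nrm y)%:C)%C.
Proof.
pose re := half *: (y + st y).
pose im := half *: ('i *: (st y - y)).
have y_def : y = re + 'i *: im.
  rewrite /im !scalerA [('i * half)]mulrC -mulrA -expr2 sqrCi mulrN1 scaleNr.
  rewrite -scalerN opprB /re -scalerDr addrACA subrr addr0 -mulr2n -scalerMnr.
  by rewrite scale_half_mulr2n.
have re_sa : st re = re by rewrite stZ conjC_realC stD stK addrC.
have im_sa : st im = im.
  by rewrite !stZ conjC_realC stB stK conjCi scaleNr -scalerN opprB.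
have re_le : nrm re <= nrm y.
  by rewrite nrm_half_scale; have := nrmD y (st y); rewrite nrm_st; lra.
have im_le : nrm im <= nrm y.
  rewrite nrm_half_scale nrm_unit ?normCi //.
  by have := nrmD (st y) (- y); rewrite nrmN nrm_st; lra.
rewrite {1}y_def tauD (tauZ _ im); apply: le_trans (ler_normD _ _) _.
rewrite normrM normCi mul1r.
apply: le_trans (lerD (norm_tau_sa re_sa) (norm_tau_sa im_sa)) _.
by rewrite -rmorphD lecR; lra.
Qed.

Lemma tau_eq0_closure (S : A -> Prop) (f : A -> A) (K : R) b : 0 <= K ->
    (forall a c, f (a - c) = f a - f c) -> (forall a, nrm (f a) <= K * nrm a) ->
    (forall c, in_star_alg st S c -> tau (f c) = 0) ->
  in_Cstar_gen st nrm S b -> tau (f b) = 0.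
Proof.
move=> K_ge0 fB fK f_alg b_cl; apply: small_norm_eq0 => e e0.
have d_gt0 : 0 < e / (4 * (K + 1)) by rewrite divr_gt0 // mulr_gt0 //; lra.
have [c [c_alg /ltW bc_le]] := b_cl _ d_gt0.
have -> : tau (f b) = tau (f (b - c)) by rewrite fB tauB (f_alg c c_alg) subr0.
apply: le_trans (norm_tau_le _) _; rewrite lecR.
have Kbc_le : K * nrm (b - c) <= e / 4.
  have -> : e / 4 = (K + 1) * (e / (4 * (K + 1))) by field; rewrite gt_eqF //; lra.
  by apply: ler_pM => //; [exact: nrm_ge0 | lra].
by have := fK (b - c); lra.
Qed.

End State.

End CstarAlgebra.

Lemma sum_if_eq (V : nmodType) (I : finType) (F : I -> V) (j : I) :
  \sum_i (if j == i then F i else 0) = F j.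
Proof. by rewrite -big_mkcond (big_pred1 j) // => i; rewrite eq_sym. Qed.

Section CyclicDiagonals.
Variables (R : realType) (A : algType R[i]) (st : A -> A) (nrm : A -> R).
Variables (n : nat) (e : 'I_n -> 'I_n -> A).
Hypotheses (cstarA : is_Cstar_algebra st nrm) (n_gt0 : (0 < n)%N).
Hypothesis e_st : forall i j, st (e i j) = e j i.
Hypothesis e_mul : forall i j k l, e i j * e k l = if j == k then e i l else 0.
Hypothesis e_sum : \sum_i e i i = 1.

Definition shift d (i : 'I_n) : 'I_n := Ordinal (ltn_pmod (i + d) n_gt0).

Lemma shiftD d1 d2 i : shift d2 (shift d1 i) = shift (d1 + d2) i.
Proof. by apply: val_inj; rewrite /= modnDml addnA. Qed.

Lemma shift_mod0 d i : (d %% n = 0)%N -> shift d i = i.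
Proof. by move=> d0; apply: val_inj; rewrite /= -modnDmr d0 addn0 modn_small. Qed.

Lemma shift_neq d i : (d %% n != 0)%N -> i != shift d i.
Proof.
move=> d_neq0; apply: contra d_neq0 => /eqP/(congr1 val) /= i_eq.
have : (i + d == i + 0 %[mod n])%N by rewrite addn0 (modn_small (ltn_ord i)) -i_eq.
by rewrite eqn_modDl mod0n.
Qed.

Definition cdiag d a := exists c : 'I_n -> R[i], a = \sum_i c i *: e i (shift d i).

Lemma cdiagD d a b : cdiag d a -> cdiag d b -> cdiag d (a + b).
Proof.
move=> [c ->] [c' ->]; exists (fun i => c i + c' i).
by rewrite -big_split; apply: eq_bigr => i _; rewrite scalerDl.
Qed.

Lemma cdiagZ d k a : cdiag d a -> cdiag d (k *: a).
Proof.
move=> [c ->]; exists (fun i => k * c i).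
by rewrite scaler_sumr; apply: eq_bigr => i _; rewrite scalerA.
Qed.

Lemma cdiag1 d : (d %% n = 0)%N -> cdiag d 1.
Proof.
move=> d0; exists (fun=> 1); rewrite -e_sum; apply: eq_bigr => i _.
by rewrite scale1r shift_mod0.
Qed.

Lemma cdiagM d1 d2 a b : cdiag d1 a -> cdiag d2 b -> cdiag (d1 + d2) (a * b).
Proof.
move=> [c ->] [c' ->]; exists (fun i => c i * c' (shift d1 i)).
rewrite mulr_suml; apply: eq_bigr => i _; rewrite mulr_sumr.
under eq_bigr => k _ do rewrite -scalerAl -scalerAr e_mul scalerA fun_if scaler0.
by rewrite sum_if_eq shiftD.
Qed.

Lemma cdiag_st d a : cdiag d a -> cdiag (d * (n - 1)) (st a).
Proof.
move=> [c ->]; set d' := (d * (n - 1))%N.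
have dd' : ((d + d') %% n = 0)%N by rewrite -[d in (d + _)%N]muln1 -mulnDr subnKC ?modnMl.
have d'd : ((d' + d) %% n = 0)%N by rewrite addnC.
exists (fun j => (c (shift d' j))^*); rewrite (st_sum cstarA) (reindex (shift d')) /=.
  by apply: eq_bigr => j _; rewrite (stZ cstarA) e_st shiftD (shift_mod0 _ d'd).
by exists (shift d) => i _; rewrite shiftD ?(shift_mod0 _ dd') ?(shift_mod0 _ d'd).
Qed.

Lemma cdiag_span_mu d a : cdiag d a -> span_mu e a.
Proof.
move=> [c ->]; exists (fun i j => if shift d i == j then c i else 0).
apply: eq_bigr => i _.
under eq_bigr => j _ do rewrite (fun_if (fun x => x *: e i j)) scale0r.
by rewrite sum_if_eq.
Qed.

Lemma cdiag_cyc_shift : cdiag 1 (cyc_shift e).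
Proof.
exists (fun=> 1); apply: eq_bigr => i _.
by rewrite scale1r; congr (e i _); apply: val_inj; rewrite /= addn1.
Qed.

Lemma cdiag_diag_unit i : cdiag 0 (e i i).
Proof.
exists (fun k => if i == k then 1 else 0).
under eq_bigr => k _ do rewrite (fun_if (fun x => x *: e k (shift 0 k))) scale1r scale0r.
by rewrite sum_if_eq (shift_mod0 _ (mod0n n)).
Qed.

Variable tau : A -> R[i].
Hypothesis stateT : is_state st tau.
Hypothesis tau_e : forall i j, tau (e i j) = if i == j then (n%:R)^-1 else 0.

Lemma tau_cdiag d a : (d %% n != 0)%N -> cdiag d a -> tau a = 0.
Proof.
move=> d_neq0 [c ->]; rewrite (tau_sum stateT) big1 // => i _.
by rewrite (tauZ stateT) tau_e (negbTE (shift_neq _ d_neq0)) mulr0.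
Qed.

End CyclicDiagonals.

Section ProjectionSpan.
Variables (R : realType) (A : algType R[i]) (st : A -> A) (nrm : A -> R).
Variables (m : nat) (p : 'I_m -> A).
Hypotheses (cstarA : is_Cstar_algebra st nrm) (p_st : forall j, st (p j) = p j).
Hypothesis p_mul : forall j k, p j * p k = if j == k then p j else 0.
Hypothesis p_sum : \sum_j p j = 1.

Lemma span_projD a b : span_proj p a -> span_proj p b -> span_proj p (a + b).
Proof.
move=> [c ->] [c' ->]; exists (fun j => c j + c' j).
by rewrite -big_split; apply: eq_bigr => j _; rewrite scalerDl.
Qed.

Lemma span_projZ k a : span_proj p a -> span_proj p (k *: a).
Proof.
move=> [c ->]; exists (fun j => k * c j).
by rewrite scaler_sumr; apply: eq_bigr => j _; rewrite scalerA.
Qed.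

Lemma span_proj1 : span_proj p 1.
Proof. by exists (fun=> 1); rewrite -p_sum; apply: eq_bigr => j _; rewrite scale1r. Qed.

Lemma span_projM a b : span_proj p a -> span_proj p b -> span_proj p (a * b).
Proof.
move=> [c ->] [c' ->]; exists (fun j => c j * c' j).
rewrite mulr_suml; apply: eq_bigr => j _; rewrite mulr_sumr.
under eq_bigr => k _ do rewrite -scalerAl -scalerAr p_mul scalerA fun_if scaler0.
by rewrite sum_if_eq.
Qed.

Lemma span_proj_st a : span_proj p a -> span_proj p (st a).
Proof.
move=> [c ->]; exists (fun j => (c j)^*).
by rewrite (st_sum cstarA); apply: eq_bigr => j _; rewrite (stZ cstarA) p_st.
Qed.

Lemma span_proj_p j : span_proj p (p j).
Proof.
exists (fun k => if j == k then 1 else 0).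
under eq_bigr => k _ do rewrite (fun_if (fun x => x *: p k)) scale1r scale0r.
by rewrite sum_if_eq.
Qed.

End ProjectionSpan.

Lemma in_catP (T : eqType) (P : T -> Prop) s1 s2 :
  {in s1 ++ s2, forall x, P x} <-> {in s1, forall x, P x} /\ {in s2, forall x, P x}.
Proof.
split=> [Ps | [P1 P2] x]; last by rewrite mem_cat => /orP [/P1 | /P2].
by split=> x x_in; apply: Ps; rewrite mem_cat x_in ?orbT.
Qed.

Lemma in_consP (T : eqType) (P : T -> Prop) x s :
  {in x :: s, forall y, P y} <-> P x /\ {in s, forall y, P y}.
Proof.
split=> [Ps | [Px Ps] y]; last by rewrite in_cons => /orP [/eqP -> | /Ps].
by split=> [|y y_in]; apply: Ps; rewrite in_cons ?eqxx ?y_in ?orbT.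
Qed.

Lemma in_cat_consP (T : eqType) (P : T -> Prop) s1 x s2 :
  {in s1 ++ x :: s2, forall y, P y} <-> P x /\ {in s1 ++ s2, forall y, P y}.
Proof.
split=> [/in_catP [P1 /in_consP [Px P2]] | [Px /in_catP [P1 P2]]].
  by split=> //; apply/in_catP.
by apply/in_catP; split=> //; apply/in_consP.
Qed.

Lemma not_sorted_split (T : Type) (r : rel T) s : ~~ sorted r s ->
  exists s1 x y s2, s = s1 ++ x :: y :: s2 /\ ~~ r x y.
Proof.
elim: s => [|x [|y s] IHs] //=; case r_xy: (r x y) => /= s_path.
  have [s1 [x' [y' [s2 [-> r_x'y']]]]] := IHs s_path.
  by exists (x :: s1), x', y', s2.
by exists [::], x, y, s; rewrite r_xy.
Qed.

Section FreeWords.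
Variables (R : realType) (A : algType R[i]) (st : A -> A) (nrm : A -> R).
Variables (tau : A -> R[i]) (m n : nat) (p : 'I_m -> A) (e : 'I_n -> 'I_n -> A).
Hypotheses (cstarA : is_Cstar_algebra st nrm) (stateT : is_state st tau).
Hypothesis n_gt0 : (0 < n)%N.
Hypotheses (p_st : forall j, st (p j) = p j)
  (p_mul : forall j k, p j * p k = if j == k then p j else 0) (p_sum : \sum_j p j = 1).
Hypotheses (e_st : forall i j, st (e i j) = e j i)
  (e_mul : forall i j k l, e i j * e k l = if j == k then e i l else 0)
  (e_sum : \sum_i e i i = 1).
Hypothesis tau_e : forall i j, tau (e i j) = if i == j then (n%:R)^-1 else 0.
Hypothesis free : free_pair tau (span_proj p) (span_mu e).

(* [(b, d, a)]: the element [a] of the first free factor if [b], of the second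
   one otherwise, of degree [d]. *)
Definition letter := (bool * nat * A)%type.
Local Notation side x := x.1.1.
Local Notation deg x := x.1.2.
Local Notation elt x := x.2.

Definition graded (x : letter) : Prop :=
  if side x then deg x = 0%N /\ span_proj p (elt x) else cdiag e n_gt0 (deg x) (elt x).

Definition merge (x y : letter) : letter := (side x, (deg x + deg y)%N, elt x * elt y).
Definition center (x : letter) : letter := (x.1, elt x - tau (elt x) *: 1).
(* Degrees are taken modulo [n]: [d * (n - 1)] stands for [- d]. *)
Definition star_letter (x : letter) : letter := (side x, (deg x * (n - 1))%N, st (elt x)).
Definition centered (x : letter) := tau (elt x) == 0.
Definition alternating (x y : letter) := side x != side y.

Lemma graded_merge x y : side x = side y -> graded x -> graded y -> graded (merge x y).
Proof.
case: x y => [[[] dx] ax] [[[] dy] ay] //= _; rewrite /graded /=; last exact: cdiagM.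
by move=> [-> x_span] [-> y_span]; split; last exact: (span_projM p_mul x_span y_span).
Qed.

Lemma graded_center x : graded x -> graded (center x).
Proof.
case: x => [[[] d] a]; rewrite /graded /=.
  move=> [-> a_span]; split=> //; rewrite -scaleNr.
  by apply: span_projD a_span (span_projZ _ (span_proj1 p_sum)).
move=> a_cdiag; have [d_mod0 | d_mod] := eqVneq (d %% n)%N 0%N.
  by rewrite -scaleNr; apply: cdiagD a_cdiag (cdiagZ _ (cdiag1 n_gt0 e_sum d_mod0)).
by rewrite (tau_cdiag stateT tau_e d_mod a_cdiag) scale0r subr0.
Qed.

Lemma centered_center x : centered (center x).
Proof. by rewrite /centered /= (tauB stateT) (tauZ stateT) (tau1 stateT) mulr1 subrr. Qed.

Lemma graded_deg_mod0 x : graded x -> ~~ centered x -> (deg x %% n = 0)%N.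
Proof.
case: x => [[[] d] a]; rewrite /graded /=; first by move=> [-> _]; rewrite mod0n.
move=> a_cdiag; apply: contraNeq => d_mod.
by rewrite /centered /= (tau_cdiag stateT tau_e d_mod a_cdiag).
Qed.

Lemma graded_star x : graded x -> graded (star_letter x).
Proof.
case: x => [[[] d] a]; rewrite /graded /=; last by move=> /(cdiag_st cstarA e_st).
by move=> [-> /(span_proj_st cstarA p_st)].
Qed.

Lemma graded_free x : graded x -> if side x then span_proj p (elt x) else span_mu e (elt x).
Proof. by case: x => [[[] d] a]; rewrite /graded /=; [case | exact: cdiag_span_mu]. Qed.

Definition word_deg (s : seq letter) : nat := \sum_(x <- s) deg x.
Definition word_prod (s : seq letter) : A := \prod_(x <- s) elt x.

Lemma word_deg_nil : word_deg [::] = 0%N.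
Proof. exact: big_nil. Qed.
Lemma word_prod_nil : word_prod [::] = 1.
Proof. exact: big_nil. Qed.
Lemma word_deg_cat s1 s2 : word_deg (s1 ++ s2) = (word_deg s1 + word_deg s2)%N.
Proof. exact: big_cat. Qed.
Lemma word_deg_cons x s : word_deg (x :: s) = (deg x + word_deg s)%N.
Proof. exact: big_cons. Qed.
Lemma word_prod_cat s1 s2 : word_prod (s1 ++ s2) = word_prod s1 * word_prod s2.
Proof. exact: big_cat. Qed.
Lemma word_prod_cons x s : word_prod (x :: s) = elt x * word_prod s.
Proof. exact: big_cons. Qed.

Lemma word_prod_merge s1 x y s2 :
  word_prod (s1 ++ x :: y :: s2) = word_prod (s1 ++ merge x y :: s2).
Proof. by rewrite !word_prod_cat !word_prod_cons /= !mulrA. Qed.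

Lemma word_deg_merge s1 x y s2 :
  word_deg (s1 ++ x :: y :: s2) = word_deg (s1 ++ merge x y :: s2).
Proof. by rewrite !word_deg_cat !word_deg_cons /= !addnA. Qed.

Lemma word_prod_center s1 x s2 : word_prod (s1 ++ x :: s2) =
  word_prod (s1 ++ center x :: s2) + tau (elt x) *: word_prod (s1 ++ s2).
Proof.
rewrite !word_prod_cat !word_prod_cons /= mulrBl mulrBr -scalerAl mul1r -scalerAr.
by rewrite subrK.
Qed.

Lemma tau_alternating_word s : s != [::] -> {in s, forall x, graded x} ->
  all centered s -> sorted alternating s -> tau (word_prod s) = 0.
Proof.
move=> s_neq0 s_graded s_centered s_alt.
rewrite /word_prod -(big_map (fun x : letter => (side x, elt x)) xpredT snd).
apply: free; first by rewrite -size_eq0 size_map size_eq0.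
  move=> _ /mapP [x x_in ->]; split; first exact: graded_free (s_graded x x_in).
  exact/eqP/(allP s_centered).
by rewrite sorted_map.
Qed.

(* The termination measure for reducing words to alternating centred ones. *)
Definition weight (s : seq letter) : nat := 2 * size s + count (predC centered) s.

Lemma weight_merge s1 x y s2 : (weight (s1 ++ merge x y :: s2) < weight (s1 ++ x :: y :: s2))%N.
Proof.
rewrite /weight !size_cat !count_cat /=.
by have := leq_b1 (~~ centered (merge x y)); lia.
Qed.

Lemma weight_center s1 x s2 : ~~ centered x ->
  (weight (s1 ++ center x :: s2) < weight (s1 ++ x :: s2))%N.
Proof. by rewrite /weight !size_cat !count_cat /= centered_center => ->; lia. Qed.

Lemma weight_drop s1 x s2 : (weight (s1 ++ s2) < weight (s1 ++ x :: s2))%N.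
Proof. by rewrite /weight !size_cat !count_cat /=; lia. Qed.

Lemma tau_word_eq0 s : {in s, forall x, graded x} -> (word_deg s %% n != 0)%N ->
  tau (word_prod s) = 0.
Proof.
move: {2}(weight s).+1 (ltnSn (weight s)) => N.
elim: N s => // N IHN s; rewrite ltnS => s_lt s_graded s_deg.
have [s_alt | /not_sorted_split [s1 [x [y [s2 [s_def same_side]]]]]] :=
  boolP (sorted alternating s); last first.
  move: s_lt s_graded s_deg; rewrite {}s_def word_prod_merge word_deg_merge.
  move=> s_lt /in_cat_consP [x_graded /in_cat_consP [y_graded s12_graded]] s_deg.
  apply: IHN s_deg; first exact: leq_trans (weight_merge _ _ _ _) s_lt.
  apply/in_cat_consP; split=> //.
  exact: graded_merge (eqP (negPn same_side)) x_graded y_graded.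
have [s_centered | ] := boolP (all centered s).
  apply: tau_alternating_word => //.
  by apply: contraNneq s_deg => ->; rewrite word_deg_nil mod0n.
rewrite -has_predC => /hasP [x x_in x_unc]; move: s_lt s_graded s_deg.
case/splitPr: x_in => s1 s2 s_lt /[dup] s_graded /in_cat_consP [x_graded s12_graded] s_deg.
rewrite word_prod_center (tauD stateT) (tauZ stateT) (IHN (s1 ++ center x :: s2)).
- rewrite (IHN (s1 ++ s2)) ?mulr0 ?addr0 //; first exact: leq_trans (weight_drop _ _ _) s_lt.
  move: s_deg; rewrite !word_deg_cat word_deg_cons addnCA -modnDml.
  by rewrite (graded_deg_mod0 x_graded x_unc).
- exact: leq_trans (weight_center _ _ x_unc) s_lt.
- by apply/in_cat_consP; split=> //; apply: graded_center.
- by move: s_deg; rewrite !word_deg_cat !word_deg_cons.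
Qed.

Lemma word_prod_nseq k x : word_prod (nseq k x) = elt x ^+ k.
Proof.
elim: k => [|k IHk]; first by rewrite word_prod_nil expr0.
by rewrite /= word_prod_cons IHk exprS.
Qed.

Lemma word_deg_nseq k x : word_deg (nseq k x) = (k * deg x)%N.
Proof. by rewrite /word_deg big_nseq iter_addn_0 mulnC. Qed.

Lemma graded_nseq k x : graded x -> {in nseq k x, forall y, graded y}.
Proof. by move=> x_graded y; rewrite mem_nseq => /andP [_ /eqP ->]. Qed.

Lemma word_prod_star s : st (word_prod s) = word_prod (rev (map star_letter s)).
Proof.
elim: s => [|x s IHs]; first by rewrite word_prod_nil (st1 cstarA).
rewrite word_prod_cons (stM cstarA) IHs /= rev_cons -cats1 word_prod_cat.
by rewrite word_prod_cons word_prod_nil mulr1.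
Qed.

Lemma word_deg_star s : word_deg (rev (map star_letter s)) = (word_deg s * (n - 1))%N.
Proof. by rewrite /word_deg big_rev big_map big_distrl. Qed.

Lemma graded_word_star s : {in s, forall x, graded x} ->
  {in rev (map star_letter s), forall x, graded x}.
Proof.
move=> s_graded y; rewrite mem_rev => /mapP [x /s_graded x_graded ->].
exact: graded_star.
Qed.

Inductive deg_dvd_span (M : nat) : A -> Prop :=
  | dspan_word s : {in s, forall x, graded x} -> (M %| word_deg s)%N ->
      deg_dvd_span M (word_prod s)
  | dspan_add a b : deg_dvd_span M a -> deg_dvd_span M b -> deg_dvd_span M (a + b)
  | dspan_scale c a : deg_dvd_span M a -> deg_dvd_span M (c *: a).

Lemma deg_dvd_spanM M a b :
  deg_dvd_span M a -> deg_dvd_span M b -> deg_dvd_span M (a * b).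
Proof.
move=> a_span; elim: a_span b => [s s_graded M_s | a1 a2 _ IH1 _ IH2 | c a1 _ IH] b b_span.
- elim: b_span => [s' s'_graded M_s' | b1 b2 _ IH1 _ IH2 | c b1 _ IH].
  + rewrite -word_prod_cat; apply: dspan_word; first exact/in_catP.
    by rewrite word_deg_cat dvdn_add.
  + by rewrite mulrDr; apply: dspan_add.
  + by rewrite -scalerAr; apply: dspan_scale.
- by rewrite mulrDl; apply: dspan_add; [apply: IH1 | apply: IH2].
- by rewrite -scalerAl; apply: dspan_scale; apply: IH.
Qed.

Lemma deg_dvd_span_st M a : deg_dvd_span M a -> deg_dvd_span M (st a).
Proof.
elim=> [s s_graded M_s | a1 a2 _ IH1 _ IH2 | c a1 _ IH].
- rewrite word_prod_star; apply: dspan_word; first exact: graded_word_star.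
  by rewrite word_deg_star dvdn_mulr.
- by rewrite (stD cstarA); apply: dspan_add.
- by rewrite (stZ cstarA); apply: dspan_scale.
Qed.

Lemma deg_dvd_span_star_alg M (G : A -> Prop) a : (forall g, G g -> deg_dvd_span M g) ->
  in_star_alg st G a -> deg_dvd_span M a.
Proof.
move=> G_span; elim=> {a} [g /G_span // | | a b _ ? _ ? | c a _ ? | a b _ ? _ ? | a _ ?].
- by rewrite -word_prod_nil; apply: dspan_word; rewrite ?word_deg_nil.
- exact: dspan_add.
- exact: dspan_scale.
- exact: deg_dvd_spanM.
- exact: deg_dvd_span_st.
Qed.

Definition shift_letter : letter := (false, 1%N, cyc_shift e).

Lemma graded_shift_letter : graded shift_letter.
Proof. exact: cdiag_cyc_shift. Qed.

Lemma tau_deg_dvd_span_shift M k b : (M %| n)%N -> (0 < k)%N -> (k < M)%N ->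
  deg_dvd_span M b -> tau (b * cyc_shift e ^+ k) = 0 /\ tau (cyc_shift e ^+ k * b) = 0.
Proof.
move=> M_n k_gt0 k_lt.
have deg_mod D : (M %| D)%N -> ((D + k) %% n != 0)%N.
  move=> M_D; apply/negP => /(dvdn_trans M_n); rewrite dvdn_addr // => /(dvdn_leq k_gt0).
  by rewrite leqNgt k_lt.
elim=> [s s_graded M_s | a1 a2 _ [IHa IHa'] _ [IHb IHb'] | c a _ [IH IH']].
- rewrite -[cyc_shift e]/(elt shift_letter) -word_prod_nseq.
  have u_graded := graded_nseq (k := k) graded_shift_letter.
  split; rewrite -word_prod_cat; apply: tau_word_eq0; rewrite ?word_deg_cat ?word_deg_nseq ?muln1.
  + exact/in_catP.
  + exact: deg_mod.
  + exact/in_catP.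
  + by rewrite addnC deg_mod.
- by rewrite mulrDl mulrDr !(tauD stateT) IHa IHb IHa' IHb' addr0.
- by rewrite -scalerAl -scalerAr !(tauZ stateT) IH IH' mulr0.
Qed.

Lemma deg_dvd_span_conj M k j : (M %| n)%N ->
  deg_dvd_span M (cyc_shift e ^+ k * p j * st (cyc_shift e) ^+ k).
Proof.
move=> M_n; rewrite -[cyc_shift e]/(elt shift_letter) -[p j]/(elt (true, 0%N, p j)).
rewrite -[st _]/(elt (star_letter shift_letter)) -!word_prod_nseq -mulrA.
rewrite -[_ * word_prod _]word_prod_cons -word_prod_cat; apply: dspan_word.
  apply/in_catP; split; first exact/graded_nseq/graded_shift_letter.
  apply/in_consP; split; first by split=> //; apply: span_proj_p.
  exact/graded_nseq/graded_star/graded_shift_letter.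
rewrite word_deg_cat word_deg_cons !word_deg_nseq /= muln1 mul1n add0n.
by rewrite -{1}[k]muln1 -mulnDr subnKC // dvdn_mull.
Qed.

Lemma deg_dvd_span_diag M i : deg_dvd_span M (e i i).
Proof.
rewrite -[e i i]mulr1 -[e i i]/(elt (false, 0%N, e i i)) -word_prod_nil -word_prod_cons.
apply: dspan_word; last by rewrite word_deg_cons word_deg_nil.
by apply/in_consP; split=> //; apply: cdiag_diag_unit.
Qed.

Lemma deg_dvd_span_shift_pow M t : (M %| t)%N -> deg_dvd_span M (cyc_shift e ^+ t).
Proof.
move=> M_t; rewrite -[cyc_shift e]/(elt shift_letter) -word_prod_nseq.
apply: dspan_word; first exact/graded_nseq/graded_shift_letter.
by rewrite word_deg_nseq muln1.
Qed.

Lemma tau_Cstar_gen_mul_shift (G : A -> Prop) M k b : (M %| n)%N -> (0 < k)%N -> (k < M)%N ->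
  (forall g, G g -> deg_dvd_span M g) -> in_Cstar_gen st nrm G b ->
  tau (b * cyc_shift e ^+ k) = 0 /\ tau (cyc_shift e ^+ k * b) = 0.
Proof.
move=> M_n k_gt0 k_lt G_span b_gen.
have alg_eq0 c : in_star_alg st G c ->
    tau (c * cyc_shift e ^+ k) = 0 /\ tau (cyc_shift e ^+ k * c) = 0.
  by move=> /(deg_dvd_span_star_alg G_span); apply: tau_deg_dvd_span_shift.
have u_ge0 := nrm_ge0 cstarA (cyc_shift e ^+ k).
split.
- apply: (tau_eq0_closure cstarA stateT (f := fun a => a * _) u_ge0 _ _ _ b_gen).
  + exact: mulrBl.
  + by move=> a; rewrite [_ * nrm a]mulrC; apply: (nrmM cstarA).
  + by move=> c /alg_eq0 [].
- apply: (tau_eq0_closure cstarA stateT (f := fun a => _ * a) u_ge0 _ _ _ b_gen).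
  + exact: mulrBr.
  + exact: (nrmM cstarA).
  + by move=> c /alg_eq0 [].
Qed.

End FreeWords.

Theorem corollary3p2 (R : realType) (A : algType R[i]) (st : A -> A)
    (nrm : A -> R) (tau : A -> R[i]) (m n : nat) (alpha : 'I_m -> R)
    (p : 'I_m -> A) (e : 'I_n -> 'I_n -> A) (l : nat) :
  (2 <= n)%N ->
  (forall j, 0 < alpha j) ->
  (forall j k : 'I_m, (j <= k)%N -> alpha j <= alpha k) ->
  \sum_j alpha j = 1 ->
  is_reduced_free_product st nrm tau alpha p e ->
  (l %| n)%N -> (1 < l)%N -> (l < n)%N ->
  let u := cyc_shift e in
  let B := in_Cstar_gen st nrm
             (fun x => (exists (k : nat) (j : 'I_m), (k <= n - 1)%N /\
                          x = u ^+ k * p j * st u ^+ k)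
                       \/ exists i : 'I_n, x = e i i) in
  let E := in_Cstar_gen st nrm
             (fun x => (exists (k : nat) (j : 'I_m), (k <= l - 1)%N /\
                          x = u ^+ k * p j * st u ^+ k)
                       \/ (exists i : 'I_n, x = e i i)
                       \/ exists t : nat, (1 <= t)%N /\ (t <= n %/ l - 1)%N /\
                          x = u ^+ (l * t)) in
  (forall b k, B b -> (0 < k)%N -> (k <= n - 1)%N ->
     tau (b * u ^+ k) = 0 /\ tau (u ^+ k * b) = 0) /\
  (forall x k, E x -> (0 < k)%N -> (k <= l - 1)%N ->
     tau (x * u ^+ k) = 0 /\ tau (u ^+ k * x) = 0).
Proof.
move=> n_ge2 _ _ _ [cstarA [stateT [_ [[p_st [p_mul p_sum]] [[e_st [e_mul e_sum]]
  [[_ tau_e] [free _]]]]]]] l_n l_gt1 l_lt u B E.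
have n_gt0 : (0 < n)%N by apply: leq_trans n_ge2.
have tau_shift := tau_Cstar_gen_mul_shift (n_gt0 := n_gt0) cstarA stateT
  p_st p_mul p_sum e_st e_mul e_sum tau_e free.
have conj_span M k j : (M %| n)%N -> deg_dvd_span p e n_gt0 M (u ^+ k * p j * st u ^+ k)
  := deg_dvd_span_conj cstarA n_gt0 p_st e_st k j.
split=> [b k b_gen k_gt0 k_le | x k x_gen k_gt0 k_le].
  apply: (tau_shift _ n k) b_gen => //; first by lia.
  by move=> _ [[k' [j [_ ->]]] | [i ->]]; [apply: conj_span | apply: deg_dvd_span_diag].
apply: (tau_shift _ l k) x_gen => //; first by lia.
move=> _ [[k' [j [_ ->]]] | [[i ->] | [t [_ [_ ->]]]]]; first exact: conj_span.
  exact: deg_dvd_span_diag.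
by apply: deg_dvd_span_shift_pow; rewrite dvdn_mulr.
Qed.
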